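(* Let $d,\alpha>0$, $T>0$, $l_0>0$, let $\rho:\mathbb{R}\to(0,\infty)$ be a continuously differentiable $T$-periodic function with $\rho(0)=1$, and let $g$ satisfy the assumption (A1) described in the context. Consider the periodic impulsive eigenvalue problem $$\begin{cases}\phi_t=\frac{d}{\rho^2(t)}\phi_{yy}+\left(\frac{\alpha}{R_0}-\frac{\dot\rho(t)}{\rho(t)}\right)\phi, & y\in(0,l_0),\ t\in((nT)^+,(n+1)T],\ n=0,1,2,\dots,\\ \phi(t,0)=\phi(t,l_0)=0, & t>0,\\ \phi(0,y)=\phi(T,y), & y\in[0,l_0],\\ \phi((nT)^+,y)=g'(0)\phi(nT,y), & y\in(0,l_0),\ n=0,1,2,\dots\end{cases}$$ The ecological reproduction index $R_0$, i.e. the number for which this problem admits a positive eigenfunction $\phi(t,y)$, is given explicitly by $$R_0=\frac{\alpha}{\frac{d\lambda_1}{T}\int_0^T\frac{1}{\rho^2(t)}\,dt-\frac{1}{T}\ln g'(0)},$$ where $\lambda_1>0$ is the principal eigenvalue of $-\frac{d^2}{dy^2}$ on $(0,l_0)$ with Dirichlet boundary conditions (so $\lambda_1=(\pi/l_0)^2$). Moreover, $R_0$ is monotonically increasing with respect to $\rho$.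
   Context: Assumption (A1): $g$ is continuously differentiable on $[0,\infty)$, $g(0)=0$, $g'(0)>0$, and for $u>0$: $g(u)>0$, $g(u)/u$ is nonincreasing in $u$, and $0<g(u)/u<1$. The notation $(nT)^+$ denotes the right limit at time $nT$; the impulsive condition prescribes the jump of the solution at the times $nT$. *)

From Stdlib Require Import Reals Lra.
From Coquelicot Require Import Coquelicot.
Open Scope R_scope.

Definition cont_on2 (f : R -> R -> R) (P : R -> R -> Prop) : Prop :=
  forall t y, P t y -> forall eps : R, 0 < eps ->
    exists delta : R, 0 < delta /\
      forall t' y', P t' y' -> Rabs (t' - t) < delta -> Rabs (y' - y) < delta ->
        Rabs (f t' y' - f t y) < eps.

(* Assumption (A1) on g, with dg its derivative on [0,oo)
   (one-sided at 0, continuous on [0,oo)). *)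
Definition assumption_A1 (g dg : R -> R) : Prop :=
  (forall u, 0 < u -> is_derive g u (dg u)) /\
  filterlim (fun h => (g h - g 0) / h) (at_right 0) (locally (dg 0)) /\
  (forall u, 0 <= u ->
     filterlim dg (within (fun x => 0 <= x) (locally u)) (locally (dg u))) /\
  g 0 = 0 /\ 0 < dg 0 /\
  (forall u, 0 < u -> 0 < g u) /\
  (forall u v, 0 < u -> u <= v -> g v / v <= g u / u) /\
  (forall u, 0 < u -> 0 < g u / u /\ g u / u < 1).

Definition admissible_rho (T : R) (rho : R -> R) : Prop :=
  (forall t, 0 < rho t) /\
  (forall t, ex_derive rho t) /\
  (forall t, continuous (Derive rho) t) /\
  (forall t, rho (t + T) = rho t) /\
  rho 0 = 1.

Definition lambda1 (l0 : R) : R := (PI / l0) ^ 2.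

(* On each period, phi restricted to (nT,(n+1)T] x [0,l0] extends continuously
   (as psi) to [nT,(n+1)T] x [0,l0] with psi(nT,.) = (nT)^+ value = g0 phi(nT,.);
   phi_t and phi_yy exist in the interior, extend continuously up to y = 0, l0,
   and satisfy the PDE. *)
Definition pos_eigenfunction (d alpha T l0 : R) (rho : R -> R) (g0 R0 : R)
    (phi : R -> R -> R) : Prop :=
  (forall t y, 0 <= t -> 0 < y < l0 -> 0 < phi t y) /\
  (forall t, 0 < t -> phi t 0 = 0 /\ phi t l0 = 0) /\
  (forall y, 0 <= y <= l0 -> phi 0 y = phi T y) /\
  (forall n : nat, exists psi ut uy uyy : R -> R -> R,
     (forall t y, INR n * T < t <= (INR n + 1) * T -> 0 <= y <= l0 ->
        psi t y = phi t y) /\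
     (forall y, 0 < y < l0 -> psi (INR n * T) y = g0 * phi (INR n * T) y) /\
     cont_on2 psi (fun t y => INR n * T <= t <= (INR n + 1) * T /\ 0 <= y <= l0) /\
     cont_on2 ut (fun t y => INR n * T < t < (INR n + 1) * T /\ 0 <= y <= l0) /\
     cont_on2 uyy (fun t y => INR n * T < t < (INR n + 1) * T /\ 0 <= y <= l0) /\
     (forall t y, INR n * T < t < (INR n + 1) * T -> 0 < y < l0 ->
        is_derive (fun s => psi s y) t (ut t y) /\
        is_derive (fun z => psi t z) y (uy t y) /\
        is_derive (fun z => uy t z) y (uyy t y) /\
        ut t y = d / (rho t ^ 2) * uyy t y
                 + (alpha / R0 - Derive rho t / rho t) * psi t y)).

Definition R0_formula (d alpha T l0 : R) (rho : R -> R) (g0 : R) : R :=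
  alpha / (d * lambda1 l0 / T * RInt (fun t => 1 / (rho t ^ 2)) 0 T - ln g0 / T).

From Stdlib Require Import Reals Lra ZArith.
From Coquelicot Require Import Coquelicot.
Open Scope R_scope.

(* Project the equation onto the first Dirichlet mode [sin (PI y / l0)]. By
   Green's formula the mode mass [m(t) = int_0^l0 phi(t,y) sin(PI y/l0) dy]
   of a solution satisfies [m' = (alpha/R0 - rho'/rho - d lambda1/rho^2) m]
   on a period, so [weight(t) m(t)] is constant on [[0,T]], where
   [weight(t) = rho(t) exp(d lambda1 int_0^t rho^-2 - alpha t / R0)]. The
   impulse [m(0^+) = g'(0) m(T)] and [m(T) > 0] force [weight(T) = g'(0)],
   which is the formula for [R0]. Conversely
   [g'(0)^(n+1) sin(PI y/l0) / weight(t)] on [(nT, (n+1)T]] is a positive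
   eigenfunction. Under (A1) [g'(0) <= 1], so the denominator of the formula
   is positive, and it decreases when [rho] increases. *)

(* Continuity of [f] on [[a, b]] is expressed as continuity on [R] of [f]
   composed with the projection [clamp a b] onto [[a, b]]. *)
Definition clamp (a b x : R) : R := Rmax a (Rmin b x).

Lemma clamp_in a b x : a <= b -> a <= clamp a b x <= b.
Proof. intros; unfold clamp, Rmax, Rmin; repeat destruct Rle_dec; lra. Qed.

Lemma clamp_id a b x : a <= x <= b -> clamp a b x = x.
Proof. intros; unfold clamp, Rmax, Rmin; repeat destruct Rle_dec; lra. Qed.

Lemma Rabs_clamp_le a b x y : Rabs (clamp a b x - clamp a b y) <= Rabs (x - y).
Proof.
  unfold clamp, Rmax, Rmin; repeat destruct Rle_dec; unfold Rabs;
    repeat destruct Rcase_abs; lra.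
Qed.

Lemma continuity_pt_clamp a b x : continuity_pt (clamp a b) x.
Proof.
  apply continuity_pt_locally; intros eps; exists eps; intros y Hy.
  exact (Rle_lt_trans _ _ _ (Rabs_clamp_le a b y x) Hy).
Qed.

Lemma continuity_pt_comp_clamp (f : R -> R) a b x :
  (forall y, a <= y <= b -> continuity_pt f y) -> a <= b ->
  continuity_pt (fun z => f (clamp a b z)) x.
Proof.
  intros Hf Hab; apply continuity_pt_comp with (f2 := f).
  - apply continuity_pt_clamp.
  - apply Hf, clamp_in, Hab.
Qed.

Lemma ex_RInt_of_continuity (f : R -> R) a b :
  (forall x, continuity_pt f x) -> ex_RInt f a b.
Proof.
  intros Hf; apply (ex_RInt_continuous (V := R_CompleteNormedModule)); intros z _.
  apply continuity_pt_filterlim, Hf.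
Qed.

Lemma ex_RInt_of_clamp (f : R -> R) a b : a <= b ->
  (forall x, continuity_pt (fun z => f (clamp a b z)) x) -> ex_RInt f a b.
Proof.
  intros Hab Hf; apply ex_RInt_ext with (fun z => f (clamp a b z)).
  - intros x Hx; rewrite Rmin_left, Rmax_right in Hx by lra.
    rewrite clamp_id by lra; reflexivity.
  - apply ex_RInt_of_continuity, Hf.
Qed.

Lemma cont_on2_clamp (f : R -> R -> R) a b c d x y : a <= b -> c <= d ->
  cont_on2 f (fun t z => a <= t <= b /\ c <= z <= d) ->
  continuity_2d_pt (fun u v => f (clamp a b u) (clamp c d v)) x y.
Proof.
  intros Hab Hcd Hf eps.
  destruct (Hf (clamp a b x) (clamp c d y) (conj (clamp_in a b x Hab) (clamp_in c d y Hcd))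
              eps (cond_pos eps)) as [delta [Hdelta Hclose]].
  exists (mkposreal _ Hdelta); intros u v Hu Hv; apply Hclose.
  - split; apply clamp_in; assumption.
  - exact (Rle_lt_trans _ _ _ (Rabs_clamp_le a b u x) Hu).
  - exact (Rle_lt_trans _ _ _ (Rabs_clamp_le c d v y) Hv).
Qed.

Lemma cont_on2_clamp_snd (f : R -> R -> R) (P : R -> R -> Prop) a b c d x y :
  c <= d -> a < x < b ->
  (forall t z, a < t < b -> c <= z <= d -> P t z) -> cont_on2 f P ->
  continuity_2d_pt (fun u v => f u (clamp c d v)) x y.
Proof.
  intros Hcd Hx HP Hf eps.
  destruct (Hf x (clamp c d y) (HP _ _ Hx (clamp_in c d y Hcd)) eps (cond_pos eps))
    as [delta [Hdelta Hclose]].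
  assert (Hpos : 0 < Rmin delta (Rmin (x - a) (b - x))) by (repeat apply Rmin_pos; lra).
  exists (mkposreal _ Hpos); intros u v Hu Hv; simpl in Hu, Hv.
  pose proof (Rmin_l delta (Rmin (x - a) (b - x))).
  pose proof (Rmin_r delta (Rmin (x - a) (b - x))).
  pose proof (Rmin_l (x - a) (b - x)); pose proof (Rmin_r (x - a) (b - x)).
  apply Hclose.
  - apply HP; [apply Rabs_def2 in Hu; lra | apply clamp_in, Hcd].
  - lra.
  - apply (Rle_lt_trans _ _ _ (Rabs_clamp_le c d v y)); lra.
Qed.

Lemma cont_on2_of_continuity_2d (f : R -> R -> R) P :
  (forall x y, continuity_2d_pt f x y) -> cont_on2 f P.
Proof.
  intros Hf t y _ eps Heps; destruct (Hf t y (mkposreal _ Heps)) as [delta Hdelta].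
  exists delta; split; [apply cond_pos | intros; apply Hdelta; assumption].
Qed.

Lemma continuity_2d_pt_comp_fst (h : R -> R) x y :
  continuity_pt h x -> continuity_2d_pt (fun u _ => h u) x y.
Proof.
  intros Hh; apply (continuity_1d_2d_pt_comp h (fun u _ => u)); [exact Hh |].
  apply continuity_2d_pt_id1.
Qed.

Lemma continuity_2d_pt_comp_snd (h : R -> R) x y :
  continuity_pt h y -> continuity_2d_pt (fun _ v => h v) x y.
Proof.
  intros Hh; apply (continuity_1d_2d_pt_comp h (fun _ v => v)); [exact Hh |].
  apply continuity_2d_pt_id2.
Qed.

Lemma continuity_2d_pt_mult_sep (p q : R -> R) x y :
  continuity_pt p x -> continuity_pt q y ->
  continuity_2d_pt (fun u v => p u * q v) x y.
Proof.
  intros; apply (continuity_2d_pt_mult (fun u _ => p u) (fun _ v => q v)).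
  - apply continuity_2d_pt_comp_fst; assumption.
  - apply continuity_2d_pt_comp_snd; assumption.
Qed.

Lemma continuity_2d_pt_section (f : R -> R -> R) x y :
  continuity_2d_pt f x y -> continuity_pt (f x) y.
Proof.
  intros Hf; apply continuity_pt_locally; intros eps; destruct (Hf eps) as [delta Hdelta].
  exists delta; intros v Hv; apply Hdelta; [| exact Hv].
  rewrite Rminus_diag, Rabs_R0; apply cond_pos.
Qed.

Lemma continuity_pt_of_is_derive (f : R -> R) x df : is_derive f x df -> continuity_pt f x.
Proof.
  intros Hf; apply continuity_pt_filterlim; apply (ex_derive_continuous f).
  exists df; exact Hf.
Qed.

Lemma is_derive_RInt_of_continuity (f : R -> R) a x :
  (forall y, continuity_pt f y) -> is_derive (fun t => RInt f a t) x (f x).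
Proof.
  intros Hf; apply (is_derive_RInt (V := R_CompleteNormedModule) f _ a x).
  - apply filter_forall; intros b; apply (RInt_correct (V := R_CompleteNormedModule)).
    apply ex_RInt_of_continuity, Hf.
  - apply continuity_pt_filterlim, Hf.
Qed.

Lemma eq_of_is_derive_0 (f : R -> R) a b x y :
  (forall z, a < z < b -> is_derive f z 0) -> a < x < b -> a < y < b -> f x = f y.
Proof.
  intros Hf Hx Hy.
  assert (Hin : forall z, Rmin x y <= z <= Rmax x y -> a < z < b).
  { intros z Hz; pose proof (Rmin_glb_lt x y a ltac:(lra) ltac:(lra));
      pose proof (Rmax_lub_lt x y b ltac:(lra) ltac:(lra)); lra. }
  destruct (MVT_gen f x y (fun _ => 0)) as [c [_ Hc]].
  - intros z Hz; apply Hf, Hin; lra.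
  - intros z Hz; exact (continuity_pt_of_is_derive _ _ _ (Hf z (Hin z Hz))).
  - lra.
Qed.

Lemma bounded_of_is_derive_bounded (f df : R -> R) a b M :
  (forall x, a < x < b -> is_derive f x (df x)) ->
  (forall x, a < x < b -> Rabs (df x) <= M) ->
  forall x, a < x < b -> Rabs (f x) <= Rabs (f ((a + b) / 2)) + M * (b - a).
Proof.
  intros Hf Hdf x Hx; set (m := (a + b) / 2).
  assert (Hin : forall z, Rmin m x <= z <= Rmax m x -> a < z < b).
  { intros z Hz; pose proof (Rmin_glb_lt m x a ltac:(unfold m; lra) ltac:(lra));
      pose proof (Rmax_lub_lt m x b ltac:(unfold m; lra) ltac:(lra)); lra. }
  destruct (MVT_gen f m x df) as [c [Hc Hmvt]].
  - intros z Hz; apply Hf, Hin; lra.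
  - intros z Hz; exact (continuity_pt_of_is_derive _ _ _ (Hf z (Hin z Hz))).
  - replace (f x) with (f m + df c * (x - m)) by lra.
    eapply Rle_trans; [apply Rabs_triang |]; apply Rplus_le_compat_l.
    rewrite Rabs_mult; apply Rmult_le_compat; try apply Rabs_pos.
    + apply Hdf, Hin, Hc.
    + apply Rabs_le; unfold m; lra.
Qed.

Lemma le_0_of_le_0_inside (phi : R -> R) a b p : a < b -> a <= p <= b ->
  continuity_pt phi p -> (forall x, a < x < b -> phi x <= 0) -> phi p <= 0.
Proof.
  intros Hab Hp Hphi Hin.
  assert (Hlim : forall F, ProperFilter' F -> filter_le F (locally p) ->
                 F (fun x => a < x < b) -> phi p <= 0).
  { intros F HF HFp HFab.
    apply (filterlim_le (F := F) phi (fun _ => 0) (phi p) 0).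
    - exact (filter_imp _ _ Hin HFab).
    - exact (filterlim_filter_le_1 _ HFp (proj1 (continuity_pt_filterlim _ _) Hphi)).
    - apply filterlim_const. }
  destruct (Req_dec p a) as [-> | Ha]; [| destruct (Req_dec p b) as [-> | Hb]].
  - apply (Hlim (at_right a)); [apply Proper_StrongProper, at_right_proper_filter | |].
    + intros Q [delta HQ]; exists delta; intros y Hy _; apply HQ, Hy.
    + assert (Hpos : 0 < b - a) by lra.
      exists (mkposreal _ Hpos); intros y Hy Hay; change (Rabs (y - a) < b - a) in Hy.
      apply Rabs_def2 in Hy; lra.
  - apply (Hlim (at_left b)); [apply Proper_StrongProper, at_left_proper_filter | |].
    + intros Q [delta HQ]; exists delta; intros y Hy _; apply HQ, Hy.
    + assert (Hpos : 0 < b - a) by lra.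
      exists (mkposreal _ Hpos); intros y Hy Hyb; change (Rabs (y - b) < b - a) in Hy.
      apply Rabs_def2 in Hy; lra.
  - apply Hin; lra.
Qed.

(* [F' = G'] on [(a, b)] makes [F - G] constant there; the domination of [G]
   by a continuous [h] vanishing at [a] and [b] identifies that constant with
   both [F a] and [F b]. *)
Lemma eq_of_derive_eq_dominated (F G g h : R -> R) K a b : a < b ->
  (forall x, continuity_pt F x) -> (forall x, continuity_pt h x) ->
  h a = 0 -> h b = 0 ->
  (forall x, a < x < b -> is_derive F x (g x) /\ is_derive G x (g x)) ->
  (forall x, a < x < b -> Rabs (G x) <= K * h x) ->
  F a = F b.
Proof.
  intros Hab HF Hh Ha Hb HFG HG.
  set (m := (a + b) / 2); set (C := F m - G m).
  assert (HC : forall x, a < x < b -> F x - C = G x).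
  { intros x Hx; enough (F x - G x = F m - G m) by (unfold C; lra).
    apply (eq_of_is_derive_0 (fun z => F z - G z) a b); [| exact Hx | unfold m; lra].
    intros z Hz; destruct (HFG z Hz) as [HFz HGz].
    replace 0 with (g z - g z) by ring.
    exact (is_derive_minus F G z _ _ HFz HGz). }
  assert (Hend : forall p, a <= p <= b -> h p = 0 -> F p = C).
  { intros p Hp Hhp.
    assert (Hle : Rabs (F p - C) - K * h p <= 0).
    { apply (le_0_of_le_0_inside (fun x => Rabs (F x - C) - K * h x) a b);
        [lra | exact Hp | |].
      - apply continuity_pt_minus; [| apply continuity_pt_scal, Hh].
        apply continuity_pt_comp with (f2 := Rabs); [| apply Rcontinuity_abs].
        apply continuity_pt_minus; [apply HF | apply continuity_pt_const; intros ? ?; reflexivity].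
      - intros x Hx; rewrite HC by exact Hx; apply Rle_minus, HG, Hx. }
    rewrite Hhp, Rmult_0_r, Rminus_0_r in Hle.
    pose proof (Rle_abs (F p - C)); pose proof (Rabs_maj2 (F p - C)); lra. }
  rewrite (Hend a), (Hend b); lra.
Qed.

Lemma continuity_pt_RInt_param (F : R -> R -> R) c d x : c <= d ->
  (forall u v, continuity_2d_pt F u v) ->
  continuity_pt (fun u => RInt (F u) c d) x.
Proof.
  intros Hcd HF; apply continuity_pt_locally; intros eps.
  assert (HexF : forall u, ex_RInt (F u) c d)
    by (intros u; apply ex_RInt_of_continuity; intros v; apply continuity_2d_pt_section, HF).
  assert (Heps' : 0 < eps / (2 * (d - c + 1))) by (apply Rdiv_lt_0_compat; [apply cond_pos | lra]).
  destruct (uniform_continuity_2d F (x - 1) (x + 1) c d (fun u v _ _ => HF u v)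
              (mkposreal _ Heps')) as [delta Hunif].
  assert (Hpos : 0 < Rmin delta 1) by (apply Rmin_pos; [apply cond_pos | lra]).
  exists (mkposreal _ Hpos); intros u Hu; change (Rabs (u - x) < Rmin delta 1) in Hu.
  pose proof (Rmin_l delta 1); pose proof (Rmin_r delta 1).
  change (RInt (F u) c d - RInt (F x) c d) with (minus (RInt (F u) c d) (RInt (F x) c d)).
  rewrite <- RInt_minus by apply HexF.
  eapply Rle_lt_trans.
  - apply (abs_RInt_le_const _ c d (eps / (2 * (d - c + 1)))); [exact Hcd | |].
    + apply ex_RInt_minus; apply HexF.
    + intros v Hv; apply Rlt_le, (Hunif x v u v); simpl; try lra.
      * apply Rabs_def2 in Hu; lra.
      * rewrite Rminus_diag, Rabs_R0; apply cond_pos.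
  - pose proof (cond_pos eps).
    apply Rlt_le_trans with (eps / 2); [| lra].
    apply Rmult_lt_reg_r with (2 * (d - c + 1)); [lra |].
    field_simplify; [nra | lra].
Qed.

Lemma RInt_param_eq_of_derive_0 (F dF : R -> R -> R) a b c d : a < b -> c <= d ->
  (forall u v, continuity_2d_pt F u v) ->
  (forall u v, a < u < b -> is_derive (fun s => F s v) u (dF u v)) ->
  (forall u v, a < u < b -> c <= v <= d -> continuity_2d_pt dF u v) ->
  (forall u, a < u < b -> RInt (dF u) c d = 0) ->
  RInt (F a) c d = RInt (F b) c d.
Proof.
  intros Hab Hcd HF HdF HdFc HdF0.
  assert (Hnear : forall u, a < u < b -> locally u (fun s => a < s < b))
    by (intros u Hu; apply (locally_interval _ u a b); [apply Hu | apply Hu | split; assumption]).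
  assert (HW : forall u, a < u < b -> is_derive (fun s => RInt (F s) c d) u 0).
  { intros u Hu; rewrite <- (HdF0 u Hu).
    rewrite (RInt_ext (dF u) (fun v => Derive (fun s => F s v) u)).
    2: { intros v _; symmetry; apply is_derive_unique, HdF, Hu. }
    apply (is_derive_RInt_param F c d u).
    - apply (filter_imp (fun s => a < s < b)); [| apply Hnear, Hu].
      intros s Hs v _; exists (dF s v); apply HdF, Hs.
    - intros v Hv; rewrite Rmin_left, Rmax_right in Hv by exact Hcd.
      apply continuity_2d_pt_ext_loc with dF; [| apply HdFc; assumption].
      destruct (Hnear u Hu) as [delta Hdelta]; exists delta; intros s w Hs _.
      symmetry; apply is_derive_unique, HdF, Hdelta, Hs.
    - apply filter_forall; intros s.
      apply ex_RInt_of_continuity; intros v; apply continuity_2d_pt_section, HF. }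
  destruct (MVT_gen (fun s => RInt (F s) c d) a b (fun _ => 0)) as [e [_ He]].
  - intros u Hu; rewrite Rmin_left, Rmax_right in Hu by lra; apply HW, Hu.
  - intros u _; apply continuity_pt_RInt_param; assumption.
  - lra.
Qed.

Lemma lambda1_pos l0 : 0 < l0 -> 0 < lambda1 l0.
Proof. intros; apply pow_lt, Rdiv_lt_0_compat; [apply PI_RGT_0 | assumption]. Qed.

Definition eigen_sin (l0 y : R) : R := sin (PI / l0 * y).
Definition eigen_cos (l0 y : R) : R := PI / l0 * cos (PI / l0 * y).

Lemma is_derive_eigen_sin l0 y : is_derive (eigen_sin l0) y (eigen_cos l0 y).
Proof. unfold eigen_sin, eigen_cos; auto_derive; [exact I | ring]. Qed.

Lemma is_derive_eigen_cos l0 y :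
  is_derive (eigen_cos l0) y (- lambda1 l0 * eigen_sin l0 y).
Proof. unfold eigen_sin, eigen_cos, lambda1; auto_derive; [exact I | ring]. Qed.

Lemma continuity_pt_eigen_sin l0 y : continuity_pt (eigen_sin l0) y.
Proof. exact (continuity_pt_of_is_derive _ _ _ (is_derive_eigen_sin l0 y)). Qed.

Lemma eigen_sin_0 l0 : eigen_sin l0 0 = 0.
Proof. unfold eigen_sin; rewrite Rmult_0_r; apply sin_0. Qed.

Lemma eigen_sin_l0 l0 : 0 < l0 -> eigen_sin l0 l0 = 0.
Proof. intros; unfold eigen_sin; replace (PI / l0 * l0) with PI by (field; lra); apply sin_PI. Qed.

Lemma eigen_sin_pos l0 y : 0 < y < l0 -> 0 < eigen_sin l0 y.
Proof.
  intros Hy; unfold eigen_sin; pose proof PI_RGT_0.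
  assert (0 < PI / l0) by (apply Rdiv_lt_0_compat; lra).
  apply sin_gt_0; [nra |].
  replace PI with (PI / l0 * l0) at 2 by (field; lra); nra.
Qed.

Lemma Rabs_eigen_cos_le l0 y : 0 < l0 -> Rabs (eigen_cos l0 y) <= PI / l0.
Proof.
  intros Hl0; unfold eigen_cos; pose proof PI_RGT_0.
  rewrite Rabs_mult, (Rabs_pos_eq (PI / l0)) by (apply Rlt_le, Rdiv_lt_0_compat; lra).
  assert (0 < PI / l0) by (apply Rdiv_lt_0_compat; lra).
  assert (Rabs (cos (PI / l0 * y)) <= 1) by (apply Rabs_le, COS_bound).
  nra.
Qed.

Lemma is_derive_mult_eigen_sin (h : R -> R) dh l0 u c : 0 < l0 -> 0 <= c <= l0 ->
  (0 < c < l0 -> is_derive h u dh) ->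
  is_derive (fun s => h s * eigen_sin l0 c) u (dh * eigen_sin l0 c).
Proof.
  intros Hl0 Hc Hh.
  destruct (Req_dec c 0) as [-> | Hc0]; [| destruct (Req_dec c l0) as [-> | Hcl0]].
  1, 2: rewrite ?eigen_sin_0, ?eigen_sin_l0, Rmult_0_r by exact Hl0;
    apply (is_derive_ext (fun _ => 0)); [intros t; symmetry; apply Rmult_0_r |];
    apply (is_derive_const (K := R_AbsRing) (V := R_NormedModule)).
  rewrite Rmult_comm; apply (is_derive_ext (fun s => eigen_sin l0 c * h s));
    [intros t; apply Rmult_comm |].
  apply is_derive_scal, Hh; lra.
Qed.

Lemma is_derive_green_boundary_term l0 (f f1 f2 : R -> R) x :
  is_derive f x (f1 x) -> is_derive f1 x (f2 x) ->
  is_derive (fun y => f1 y * eigen_sin l0 y - f y * eigen_cos l0 y) x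
    ((f2 x + lambda1 l0 * f x) * eigen_sin l0 x).
Proof.
  intros Hf1 Hf2.
  pose proof (is_derive_mult f1 (eigen_sin l0) x _ _ Hf2 (is_derive_eigen_sin l0 x)
                ltac:(intros; apply Rmult_comm)) as Hd1.
  pose proof (is_derive_mult f (eigen_cos l0) x _ _ Hf1 (is_derive_eigen_cos l0 x)
                ltac:(intros; apply Rmult_comm)) as Hd2.
  replace ((f2 x + lambda1 l0 * f x) * eigen_sin l0 x) with
    (f2 x * eigen_sin l0 x + f1 x * eigen_cos l0 x
     - (f1 x * eigen_cos l0 x + f x * (- lambda1 l0 * eigen_sin l0 x))) by ring.
  exact (is_derive_minus _ _ x _ _ Hd1 Hd2).
Qed.

(* In Green's formula below [f'] is known only on [(0, l0)]; this domination
   is what makes the boundary term vanish at both ends. *)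
Lemma green_boundary_term_bound l0 (f f1 f2 : R -> R) : 0 < l0 ->
  (forall y, 0 < y < l0 -> is_derive f y (f1 y) /\ is_derive f1 y (f2 y)) ->
  (forall y, continuity_pt (fun z => f2 (clamp 0 l0 z)) y) ->
  exists K, forall y, 0 < y < l0 ->
    Rabs (f1 y * eigen_sin l0 y - f y * eigen_cos l0 y)
    <= K * (Rabs (eigen_sin l0 y) + Rabs (f y)).
Proof.
  intros Hl0 Hf Cf2.
  destruct (bounded_continuity (V := R_NormedModule) (fun z => f2 (clamp 0 l0 z)) 0 l0)
    as [M2 HM2].
  { intros x _; exact (proj1 (continuity_pt_filterlim _ _) (Cf2 x)). }
  set (B := Rabs (f1 ((0 + l0) / 2)) + M2 * (l0 - 0)).
  assert (HB : forall y, 0 < y < l0 -> Rabs (f1 y) <= B).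
  { apply (bounded_of_is_derive_bounded f1 f2); [apply Hf |].
    intros y Hy; specialize (HM2 y ltac:(lra)); rewrite clamp_id in HM2 by lra.
    apply Rlt_le, HM2. }
  exists (Rabs B + PI / l0); intros y Hy.
  pose proof (Rle_trans _ _ _ (HB y Hy) (Rle_abs B)).
  pose proof (Rabs_eigen_cos_le l0 y Hl0).
  pose proof (Rabs_pos (eigen_sin l0 y)); pose proof (Rabs_pos (f y)).
  pose proof (Rabs_pos (f1 y)); pose proof (Rabs_pos (eigen_cos l0 y)).
  assert (0 < PI / l0) by (apply Rdiv_lt_0_compat; [apply PI_RGT_0 | exact Hl0]).
  unfold Rminus; eapply Rle_trans; [apply Rabs_triang |]; rewrite Rabs_Ropp, !Rabs_mult.
  nra.
Qed.

Lemma RInt_green_eigen_sin l0 (f f1 f2 : R -> R) : 0 < l0 ->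
  (forall y, 0 < y < l0 -> is_derive f y (f1 y) /\ is_derive f1 y (f2 y)) ->
  (forall y, continuity_pt (fun z => f (clamp 0 l0 z)) y) ->
  (forall y, continuity_pt (fun z => f2 (clamp 0 l0 z)) y) ->
  f 0 = 0 -> f l0 = 0 ->
  is_RInt (fun y => (f2 y + lambda1 l0 * f y) * eigen_sin l0 y) 0 l0 0.
Proof.
  intros Hl0 Hf Cf Cf2 Hf0 Hfl0.
  set (H := fun y => (f2 y + lambda1 l0 * f y) * eigen_sin l0 y).
  assert (CH : forall x, continuity_pt (fun z => H (clamp 0 l0 z)) x).
  { intros x; unfold H; apply continuity_pt_mult; [apply continuity_pt_plus |].
    - apply Cf2.
    - apply continuity_pt_scal, Cf.
    - apply continuity_pt_comp_clamp; [intros; apply continuity_pt_eigen_sin | lra]. }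
  set (F := fun x => RInt (fun z => H (clamp 0 l0 z)) 0 x).
  assert (HF : forall x, is_derive F x (H (clamp 0 l0 x)))
    by (intros x; exact (is_derive_RInt_of_continuity (fun z => H (clamp 0 l0 z)) 0 x CH)).
  destruct (green_boundary_term_bound l0 f f1 f2 Hl0 Hf Cf2) as [K HK].
  assert (Hex : ex_RInt H 0 l0) by (apply ex_RInt_of_clamp; [lra | exact CH]).
  pose proof (RInt_correct (V := R_CompleteNormedModule) _ _ _ Hex) as HI.
  enough (E : RInt H 0 l0 = 0) by (rewrite E in HI; exact HI).
  transitivity (F l0 - F 0).
  { unfold F; rewrite RInt_point; change (@zero R_CompleteNormedModule) with 0.
    rewrite Rminus_0_r; apply RInt_ext; intros x Hx.
    rewrite Rmin_left, Rmax_right in Hx by lra; rewrite clamp_id by lra; reflexivity. }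
  apply Rminus_diag_eq; symmetry.
  apply (eq_of_derive_eq_dominated F
           (fun y => f1 y * eigen_sin l0 y - f y * eigen_cos l0 y)
           (fun x => H (clamp 0 l0 x))
           (fun y => Rabs (eigen_sin l0 y) + Rabs (f (clamp 0 l0 y))) K); [exact Hl0 | | | | | |].
  - intros x; exact (continuity_pt_of_is_derive _ _ _ (HF x)).
  - intros x; apply continuity_pt_plus;
      (apply continuity_pt_comp with (f2 := Rabs); [| apply Rcontinuity_abs]);
      [apply continuity_pt_eigen_sin | apply Cf].
  - rewrite eigen_sin_0, clamp_id, Hf0, Rabs_R0 by lra; ring.
  - rewrite eigen_sin_l0, clamp_id, Hfl0, Rabs_R0 by lra; ring.
  - intros x Hx; split; [exact (HF x) |].
    destruct (Hf x Hx) as [Hf1 Hf2]; rewrite clamp_id by lra.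
    exact (is_derive_green_boundary_term l0 f f1 f2 x Hf1 Hf2).
  - intros x Hx; rewrite clamp_id by lra; apply HK, Hx.
Qed.

Lemma RInt_mult_eigen_sin_pos l0 (f : R -> R) : 0 < l0 ->
  (forall y, continuity_pt (fun z => f (clamp 0 l0 z)) y) ->
  (forall y, 0 < y < l0 -> 0 < f y) ->
  0 < RInt (fun y => f y * eigen_sin l0 y) 0 l0.
Proof.
  intros Hl0 Cf Hf.
  rewrite (RInt_ext _ (fun y => f (clamp 0 l0 y) * eigen_sin l0 y)).
  - apply RInt_gt_0; [exact Hl0 | |].
    + intros x Hx; rewrite clamp_id by lra; apply Rmult_lt_0_compat;
        [apply Hf | apply eigen_sin_pos]; exact Hx.
    + intros x _; apply continuity_pt_filterlim, continuity_pt_mult;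
        [apply Cf | apply continuity_pt_eigen_sin].
  - intros x Hx; rewrite Rmin_left, Rmax_right in Hx by lra; rewrite clamp_id by lra; reflexivity.
Qed.

Lemma admissible_rho_T T rho : admissible_rho T rho -> rho T = 1.
Proof. intros (_ & _ & _ & Hper & H0); rewrite <- H0, <- (Rplus_0_l T); apply Hper. Qed.

Lemma continuity_pt_inv_sqr_rho T rho t :
  admissible_rho T rho -> continuity_pt (fun s => 1 / (rho s ^ 2)) t.
Proof.
  intros (Hpos & Hder & _); apply continuity_pt_filterlim.
  apply (ex_derive_continuous (fun s => 1 / (rho s ^ 2))); auto_derive.
  pose proof (Hpos t); repeat split; [apply Hder | nra].
Qed.

Lemma RInt_inv_sqr_rho_pos T rho : 0 < T -> admissible_rho T rho ->
  0 < RInt (fun t => 1 / (rho t ^ 2)) 0 T.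
Proof.
  intros HT Hrho; apply RInt_gt_0; [exact HT | |].
  - intros x _; destruct Hrho as [Hpos _]; pose proof (Hpos x).
    apply Rdiv_lt_0_compat; [lra | apply pow_lt; assumption].
  - intros x _; apply continuity_pt_filterlim, (continuity_pt_inv_sqr_rho T), Hrho.
Qed.

(* [k] stands for [alpha / R0]. *)
Definition weight (d l0 : R) (rho : R -> R) (k t : R) : R :=
  rho t * exp (d * lambda1 l0 * RInt (fun u => 1 / (rho u ^ 2)) 0 t - k * t).

Definition weight_rate (d l0 : R) (rho : R -> R) (k t : R) : R :=
  Derive rho t / rho t + d * lambda1 l0 * (1 / (rho t ^ 2)) - k.

Lemma weight_pos d l0 T rho k t : admissible_rho T rho -> 0 < weight d l0 rho k t.
Proof. intros [Hpos _]; apply Rmult_lt_0_compat; [apply Hpos | apply exp_pos]. Qed.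

Lemma weight_0 d l0 T rho k : admissible_rho T rho -> weight d l0 rho k 0 = 1.
Proof.
  intros (_ & _ & _ & _ & H0); unfold weight; rewrite RInt_point, H0.
  change (@zero R_CompleteNormedModule) with 0.
  replace (d * lambda1 l0 * 0 - k * 0) with 0 by ring; rewrite exp_0; ring.
Qed.

Lemma is_derive_weight d l0 T rho k t : admissible_rho T rho ->
  is_derive (weight d l0 rho k) t (weight d l0 rho k t * weight_rate d l0 rho k t).
Proof.
  intros Hrho; pose proof Hrho as (Hpos & Hder & _).
  assert (Hc : forall s, continuity_pt (fun u => 1 / (rho u ^ 2)) s)
    by (intros; apply (continuity_pt_inv_sqr_rho T), Hrho).
  unfold weight, weight_rate; auto_derive.
  - split; [apply Hder | split; [| split; [apply filter_forall; exact Hc | exact I]]].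
    apply ex_RInt_of_continuity, Hc.
  - change (fun x => 1 * / (rho x * (rho x * 1))) with (fun u => 1 / (rho u ^ 2)).
    change (Derive (fun x => rho x) t) with (Derive rho t).
    pose proof (Hpos t); unfold Rminus; field; lra.
Qed.

Lemma continuity_pt_weight d l0 T rho k t : admissible_rho T rho ->
  continuity_pt (weight d l0 rho k) t.
Proof.
  intros Hrho; exact (continuity_pt_of_is_derive _ _ _ (is_derive_weight d l0 T rho k t Hrho)).
Qed.

Lemma continuity_pt_weight_rate d l0 T rho k t : admissible_rho T rho ->
  continuity_pt (weight_rate d l0 rho k) t.
Proof.
  intros Hrho; pose proof Hrho as (Hpos & Hder & Hdc & _).
  assert (Crho : continuity_pt rho t)
    by (apply continuity_pt_filterlim, (ex_derive_continuous rho), Hder).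
  unfold weight_rate; apply continuity_pt_minus; [apply continuity_pt_plus |].
  - apply continuity_pt_div; [apply continuity_pt_filterlim, Hdc | exact Crho |].
    apply Rgt_not_eq, Hpos.
  - apply continuity_pt_scal, (continuity_pt_inv_sqr_rho T), Hrho.
  - apply continuity_pt_const; intros ? ?; reflexivity.
Qed.

Definition R0_denominator (d T l0 : R) (rho : R -> R) (g0 : R) : R :=
  d * lambda1 l0 / T * RInt (fun t => 1 / (rho t ^ 2)) 0 T - ln g0 / T.

Lemma R0_denominator_pos d T l0 rho g0 : 0 < d -> 0 < T -> 0 < l0 ->
  admissible_rho T rho -> 0 < g0 <= 1 -> 0 < R0_denominator d T l0 rho g0.
Proof.
  intros Hd HT Hl0 Hrho Hg0; unfold R0_denominator.
  pose proof (RInt_inv_sqr_rho_pos T rho HT Hrho); pose proof (lambda1_pos l0 Hl0).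
  assert (ln g0 <= 0) by (rewrite <- ln_1; apply ln_le; lra).
  assert (0 < d * lambda1 l0 * RInt (fun t => 1 / (rho t ^ 2)) 0 T)
    by (apply Rmult_lt_0_compat; [apply Rmult_lt_0_compat |]; assumption).
  replace (d * lambda1 l0 / T * RInt (fun t => 1 / (rho t ^ 2)) 0 T - ln g0 / T)
    with ((d * lambda1 l0 * RInt (fun t => 1 / (rho t ^ 2)) 0 T - ln g0) / T) by (field; lra).
  apply Rdiv_lt_0_compat; lra.
Qed.

Lemma weight_T_eq_iff d l0 T rho k g0 : 0 < T -> 0 < g0 -> admissible_rho T rho ->
  weight d l0 rho k T = g0 <-> k = R0_denominator d T l0 rho g0.
Proof.
  intros HT Hg0 Hrho; unfold weight, R0_denominator.
  rewrite (admissible_rho_T T rho Hrho), Rmult_1_l.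
  set (I := RInt (fun u => 1 / (rho u ^ 2)) 0 T); split.
  - intros HE; apply (f_equal ln) in HE; rewrite ln_exp in HE.
    apply (Rmult_eq_reg_r T); [| lra]; field_simplify; lra.
  - intros ->; rewrite <- (exp_ln g0) at 2 by exact Hg0; f_equal; field; lra.
Qed.

(* Holds for [b = 0] too, since [a / 0 = 0 <> c]. *)
Lemma Rdiv_eq_iff a b c : a <> 0 -> c <> 0 -> (a / b = c <-> b = a / c).
Proof.
  intros Ha Hc; split; intros E.
  - destruct (Req_dec b 0) as [-> | Hb].
    + unfold Rdiv in E; rewrite Rinv_0, Rmult_0_r in E; congruence.
    + rewrite <- E; field; split; [exact Hb | exact Ha].
  - rewrite E; field; split; assumption.
Qed.

Lemma assumption_A1_slope_0 g dg : assumption_A1 g dg -> 0 < dg 0 <= 1.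
Proof.
  intros (_ & Hlim & _ & Hg0 & Hdg0 & _ & _ & Hslope); split; [exact Hdg0 |].
  apply (filterlim_le (F := at_right 0) (fun h => (g h - g 0) / h) (fun _ => 1) (dg 0) 1).
  - exists (mkposreal _ Rlt_0_1); intros h _ Hh; rewrite Hg0, Rminus_0_r.
    apply Rlt_le, Hslope, Hh.
  - exact Hlim.
  - apply filterlim_const.
Qed.

Section FirstPeriod.

Variables (d T l0 k g0 : R) (rho : R -> R) (psi ut uy uyy : R -> R -> R).
Hypotheses (HT : 0 < T) (Hl0 : 0 < l0) (Hrho : admissible_rho T rho).
Hypothesis Hpsi : cont_on2 psi (fun t y => 0 <= t <= T /\ 0 <= y <= l0).
Hypothesis Hut : cont_on2 ut (fun t y => 0 < t < T /\ 0 <= y <= l0).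
Hypothesis Huyy : cont_on2 uyy (fun t y => 0 < t < T /\ 0 <= y <= l0).
Hypothesis Hbc : forall t, 0 < t < T -> psi t 0 = 0 /\ psi t l0 = 0.
Hypothesis Hpde : forall t y, 0 < t < T -> 0 < y < l0 ->
  is_derive (fun s => psi s y) t (ut t y) /\
  is_derive (fun z => psi t z) y (uy t y) /\
  is_derive (fun z => uy t z) y (uyy t y) /\
  ut t y = d / (rho t ^ 2) * uyy t y + (k - Derive rho t / rho t) * psi t y.
Hypothesis Hjump : forall y, 0 < y < l0 -> psi 0 y = g0 * psi T y.
Hypothesis Hpos : forall y, 0 < y < l0 -> 0 < psi T y.

Let M := weight d l0 rho k.
Let S := eigen_sin l0.

Let Z (u v : R) : R :=
  M (clamp 0 T u) * psi (clamp 0 T u) (clamp 0 l0 v) * S (clamp 0 l0 v).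

Let dZ (u v : R) : R :=
  (M u * weight_rate d l0 rho k u * psi u (clamp 0 l0 v) + M u * ut u (clamp 0 l0 v))
  * S (clamp 0 l0 v).

Lemma continuity_pt_psi_section t y : 0 <= t <= T ->
  continuity_pt (fun z => psi t (clamp 0 l0 z)) y.
Proof.
  intros Ht; pose proof (continuity_2d_pt_section _ t y
                           (cont_on2_clamp psi 0 T 0 l0 t y ltac:(lra) ltac:(lra) Hpsi)) as Hc.
  cbv beta in Hc; rewrite (clamp_id 0 T t Ht) in Hc; exact Hc.
Qed.

Lemma RInt_weighted_mode_derive_0 u : 0 < u < T -> RInt (dZ u) 0 l0 = 0.
Proof.
  intros Hu.
  assert (Hgreen : is_RInt (fun y => (uyy u y + lambda1 l0 * psi u y) * S y) 0 l0 0).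
  { apply (RInt_green_eigen_sin l0 (psi u) (uy u));
      [exact Hl0 | | | | apply Hbc, Hu | apply Hbc, Hu].
    - intros y Hy; destruct (Hpde u y Hu Hy) as (_ & Hy1 & Hy2 & _); split; assumption.
    - intros y; apply continuity_pt_psi_section; lra.
    - intros y; exact (continuity_2d_pt_section (fun u' v => uyy u' (clamp 0 l0 v)) u y
                         (cont_on2_clamp_snd uyy _ 0 T 0 l0 u y ltac:(lra) Hu
                            (fun t z Ht Hz => conj Ht Hz) Huyy)). }
  apply (is_RInt_scal _ _ _ (M u * d / (rho u ^ 2))) in Hgreen.
  transitivity (scal (M u * d / (rho u ^ 2)) (0 : R));
    [apply is_RInt_unique | unfold scal; simpl; unfold mult; simpl; ring].
  refine (is_RInt_ext _ _ _ _ _ _ Hgreen); intros y Hy.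
  rewrite Rmin_left, Rmax_right in Hy by lra.
  destruct (Hpde u y Hu Hy) as (_ & _ & _ & Hut_eq).
  unfold dZ, weight_rate; rewrite clamp_id, Hut_eq by lra.
  unfold scal; simpl; unfold mult; simpl.
  destruct Hrho as [Hrho_pos _]; pose proof (Hrho_pos u); field; lra.
Qed.

Lemma weighted_mode_conserved :
  RInt (fun y => M 0 * psi 0 y * S y) 0 l0 = RInt (fun y => M T * psi T y * S y) 0 l0.
Proof.
  assert (HZ : forall t, 0 <= t <= T ->
            RInt (Z t) 0 l0 = RInt (fun y => M t * psi t y * S y) 0 l0).
  { intros t Ht; apply RInt_ext; intros y Hy; rewrite Rmin_left, Rmax_right in Hy by lra.
    unfold Z; rewrite !clamp_id by lra; reflexivity. }
  rewrite <- HZ, <- HZ by lra.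
  apply (RInt_param_eq_of_derive_0 Z dZ);
    [exact HT | lra | | | | exact RInt_weighted_mode_derive_0].
  - intros u v; apply continuity_2d_pt_mult; [apply continuity_2d_pt_mult |].
    + apply continuity_2d_pt_comp_fst, continuity_pt_comp_clamp; [| lra].
      intros; apply (continuity_pt_weight d l0 T), Hrho.
    + apply cont_on2_clamp; [lra | lra | exact Hpsi].
    + apply continuity_2d_pt_comp_snd, continuity_pt_comp_clamp; [| lra].
      intros; apply continuity_pt_eigen_sin.
  - intros u v Hu; set (c := clamp 0 l0 v).
    apply (is_derive_ext_loc (fun s => M s * psi s c * S c)).
    { apply (filter_imp (fun s => 0 < s < T)).
      - intros s Hs; unfold Z; rewrite clamp_id by lra; reflexivity.
      - apply (locally_interval _ u 0 T); [apply Hu | apply Hu | split; assumption]. }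
    apply is_derive_mult_eigen_sin; [exact Hl0 | apply clamp_in; lra |].
    intros Hc; exact (is_derive_mult M (fun s => psi s c) u _ _
                        (is_derive_weight d l0 T rho k u Hrho) (proj1 (Hpde u c Hu Hc))
                        ltac:(intros; apply Rmult_comm)).
  - intros u v Hu _; unfold dZ; apply continuity_2d_pt_mult; [apply continuity_2d_pt_plus |].
    + apply continuity_2d_pt_mult; [apply continuity_2d_pt_comp_fst, continuity_pt_mult |].
      * apply (continuity_pt_weight d l0 T), Hrho.
      * apply (continuity_pt_weight_rate d l0 T), Hrho.
      * eapply cont_on2_clamp_snd; [lra | exact Hu | | exact Hpsi].
        intros t z Ht Hz; split; lra.
    + apply continuity_2d_pt_mult; [apply continuity_2d_pt_comp_fst |].
      * apply (continuity_pt_weight d l0 T), Hrho.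
      * eapply cont_on2_clamp_snd; [lra | exact Hu | | exact Hut].
        intros t z Ht Hz; split; assumption.
    + apply continuity_2d_pt_comp_snd, continuity_pt_comp_clamp; [| lra].
      intros; apply continuity_pt_eigen_sin.
Qed.

Lemma weight_T_eq_jump : M T = g0.
Proof.
  set (I := RInt (fun y => psi T y * S y) 0 l0).
  assert (CT : forall y, continuity_pt (fun z => psi T (clamp 0 l0 z) * S (clamp 0 l0 z)) y).
  { intros y; apply continuity_pt_mult; [apply continuity_pt_psi_section; lra |].
    apply continuity_pt_comp_clamp; [intros; apply continuity_pt_eigen_sin | lra]. }
  assert (HI : 0 < I).
  { apply RInt_mult_eigen_sin_pos; [exact Hl0 | | exact Hpos].
    intros y; apply continuity_pt_psi_section; lra. }
  assert (Hscal : forall c, RInt (fun y => c * (psi T y * S y)) 0 l0 = c * I).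
  { intros c; apply (RInt_scal (V := R_CompleteNormedModule)).
    apply ex_RInt_of_clamp; [lra | exact CT]. }
  pose proof weighted_mode_conserved as HC.
  rewrite (RInt_ext _ (fun y => g0 * (psi T y * S y))) in HC.
  2: { intros y Hy; rewrite Rmin_left, Rmax_right in Hy by lra.
       rewrite Hjump by exact Hy; unfold M; rewrite (weight_0 d l0 T rho k Hrho), Rmult_1_l.
       apply Rmult_assoc. }
  rewrite (RInt_ext (fun y => M T * psi T y * S y) (fun y => M T * (psi T y * S y))) in HC
    by (intros; apply Rmult_assoc).
  rewrite !Hscal in HC; apply (Rmult_eq_reg_r I); [lra | lra].
Qed.

End FirstPeriod.

Lemma R0_eq_formula_of_pos_eigenfunction d alpha T l0 rho g0 R0 phi :
  0 < d -> 0 < alpha -> 0 < T -> 0 < l0 -> admissible_rho T rho -> 0 < g0 <= 1 ->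
  pos_eigenfunction d alpha T l0 rho g0 R0 phi -> R0 = R0_formula d alpha T l0 rho g0.
Proof.
  intros Hd Halpha HT Hl0 Hrho Hg0 (Hphi_pos & Hphi_bc & Hphi_per & Hperiods).
  destruct (Hperiods 0%nat) as (psi & ut & uy & uyy & Hpsi & Hjump & Cpsi & Cut & Cuyy & Hpde).
  simpl INR in *; rewrite Rmult_0_l, Rplus_0_l, Rmult_1_l in *.
  assert (HwT : weight d l0 rho (alpha / R0) T = g0).
  { apply (weight_T_eq_jump d T l0 (alpha / R0) g0 rho psi ut uy uyy); try assumption.
    - intros t Ht; rewrite !Hpsi by lra; apply Hphi_bc; lra.
    - intros y Hy; rewrite Hjump, Hphi_per, Hpsi by lra; reflexivity.
    - intros y Hy; rewrite Hpsi by lra; apply Hphi_pos; lra. }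
  apply weight_T_eq_iff in HwT; [| lra | lra | exact Hrho].
  change (R0 = alpha / R0_denominator d T l0 rho g0).
  apply Rdiv_eq_iff; [lra | | exact HwT].
  apply Rgt_not_eq, R0_denominator_pos; assumption.
Qed.

(* [period_index T t = n] exactly when [t] lies in the period [(nT, (n+1)T]]. *)
Definition period_index (T t : R) : R := IZR (floor1 (t / T)).

Lemma floor1_unique x n : IZR n < x <= IZR n + 1 -> floor1 x = n.
Proof.
  intros Hn; unfold floor1; destruct (floor1_ex x) as [m Hm]; simpl.
  apply Z.le_antisymm; apply Zlt_succ_le, lt_IZR; rewrite succ_IZR; lra.
Qed.

Lemma period_index_eq T t n : 0 < T -> IZR n * T < t <= (IZR n + 1) * T ->
  period_index T t = IZR n.
Proof.
  intros HT Ht; unfold period_index; f_equal; apply floor1_unique; split.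
  - apply (Rmult_lt_reg_r T); [exact HT |]; unfold Rdiv; rewrite Rmult_assoc, Rinv_l; lra.
  - apply (Rmult_le_reg_r T); [exact HT |]; unfold Rdiv; rewrite Rmult_assoc, Rinv_l; lra.
Qed.

Definition mode_amplitude (d l0 : R) (rho : R -> R) (k g0 c t : R) : R :=
  Rpower g0 c / weight d l0 rho k t.

Lemma mode_amplitude_pos d l0 T rho k g0 c t : admissible_rho T rho ->
  0 < mode_amplitude d l0 rho k g0 c t.
Proof.
  intros Hrho; apply Rdiv_lt_0_compat; [apply exp_pos | apply (weight_pos d l0 T), Hrho].
Qed.

Lemma is_derive_mode_amplitude d l0 T rho k g0 c t : admissible_rho T rho ->
  is_derive (mode_amplitude d l0 rho k g0 c) t
    (- mode_amplitude d l0 rho k g0 c t * weight_rate d l0 rho k t).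
Proof.
  intros Hrho; pose proof (weight_pos d l0 T rho k t Hrho).
  unfold mode_amplitude.
  apply (is_derive_ext (fun s => Rpower g0 c * / weight d l0 rho k s)); [reflexivity |].
  replace (- (Rpower g0 c / weight d l0 rho k t) * weight_rate d l0 rho k t) with
    (Rpower g0 c * (- (weight d l0 rho k t * weight_rate d l0 rho k t)
                     / (weight d l0 rho k t ^ 2))) by (field; lra).
  apply is_derive_scal, is_derive_inv; [| lra].
  apply (is_derive_weight d l0 T), Hrho.
Qed.

Lemma continuity_pt_mode_amplitude d l0 T rho k g0 c t : admissible_rho T rho ->
  continuity_pt (mode_amplitude d l0 rho k g0 c) t.
Proof.
  intros Hrho.
  exact (continuity_pt_of_is_derive _ _ _ (is_derive_mode_amplitude d l0 T rho k g0 c t Hrho)).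
Qed.

Lemma mode_amplitude_succ d l0 rho k g0 c t : 0 < g0 ->
  mode_amplitude d l0 rho k g0 (c + 1) t = g0 * mode_amplitude d l0 rho k g0 c t.
Proof.
  intros Hg0; unfold mode_amplitude; rewrite Rpower_plus, Rpower_1 by exact Hg0.
  unfold Rdiv; ring.
Qed.

Lemma mode_amplitude_period d l0 T rho k g0 : 0 < T -> 0 < g0 -> admissible_rho T rho ->
  k = R0_denominator d T l0 rho g0 ->
  mode_amplitude d l0 rho k g0 0 0 = mode_amplitude d l0 rho k g0 1 T.
Proof.
  intros HT Hg0 Hrho Hk; unfold mode_amplitude.
  rewrite (weight_0 d l0 T rho k Hrho), (proj2 (weight_T_eq_iff d l0 T rho k g0 HT Hg0 Hrho) Hk).
  rewrite Rpower_O, Rpower_1 by exact Hg0; field; lra.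
Qed.

Lemma mode_solution_pde d l0 T rho k g0 c t y : admissible_rho T rho ->
  let a := mode_amplitude d l0 rho k g0 c in
  is_derive (fun s => a s * eigen_sin l0 y) t
    ((- a t * weight_rate d l0 rho k t) * eigen_sin l0 y) /\
  is_derive (fun z => a t * eigen_sin l0 z) y (a t * eigen_cos l0 y) /\
  is_derive (fun z => a t * eigen_cos l0 z) y (a t * (- lambda1 l0 * eigen_sin l0 y)) /\
  (- a t * weight_rate d l0 rho k t) * eigen_sin l0 y
  = d / (rho t ^ 2) * (a t * (- lambda1 l0 * eigen_sin l0 y))
    + (k - Derive rho t / rho t) * (a t * eigen_sin l0 y).
Proof.
  intros Hrho a; split; [| split; [| split]].
  - apply (is_derive_scal_l a t _ (eigen_sin l0 y)), (is_derive_mode_amplitude d l0 T), Hrho.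
  - apply is_derive_scal, is_derive_eigen_sin.
  - apply is_derive_scal, is_derive_eigen_cos.
  - unfold weight_rate; pose proof (proj1 Hrho t); field; lra.
Qed.

Lemma pos_eigenfunction_of_R0_formula d alpha T l0 rho g0 :
  0 < d -> 0 < alpha -> 0 < T -> 0 < l0 -> admissible_rho T rho -> 0 < g0 <= 1 ->
  exists phi, pos_eigenfunction d alpha T l0 rho g0 (R0_formula d alpha T l0 rho g0) phi.
Proof.
  intros Hd Halpha HT Hl0 Hrho Hg0; set (k := R0_denominator d T l0 rho g0).
  assert (Hk : alpha / R0_formula d alpha T l0 rho g0 = k).
  { apply Rdiv_eq_iff; [lra | apply Rgt_not_eq, R0_denominator_pos; assumption | reflexivity]. }
  set (a := mode_amplitude d l0 rho k g0); set (S := eigen_sin l0).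
  assert (Ca : forall c t, continuity_pt (a c) t)
    by (intros; apply (continuity_pt_mode_amplitude d l0 T), Hrho).
  exists (fun t y => a (period_index T t + 1) t * S y).
  unfold pos_eigenfunction; rewrite Hk; split; [| split; [| split]].
  - intros t y _ Hy; apply Rmult_lt_0_compat;
      [apply (mode_amplitude_pos d l0 T), Hrho | apply eigen_sin_pos, Hy].
  - intros t _; unfold S; rewrite eigen_sin_0, eigen_sin_l0 by exact Hl0; split; ring.
  - intros y _; f_equal.
    rewrite (period_index_eq T 0 (-1)), (period_index_eq T T 0) by (simpl; lra).
    replace (IZR (-1) + 1) with 0 by (simpl; ring); replace (IZR 0 + 1) with 1 by (simpl; ring).
    apply (mode_amplitude_period d l0 T); [exact HT | lra | exact Hrho | reflexivity].
  - intros n.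
    exists (fun t y => a (INR n + 1) t * S y),
      (fun t y => (- a (INR n + 1) t * weight_rate d l0 rho k t) * S y),
      (fun t y => a (INR n + 1) t * eigen_cos l0 y),
      (fun t y => a (INR n + 1) t * (- lambda1 l0 * S y)).
    split; [| split; [| split; [| split; [| split]]]].
    + intros t y Ht _; rewrite INR_IZR_INZ in Ht.
      rewrite (period_index_eq T t (Z.of_nat n) HT Ht), <- INR_IZR_INZ; reflexivity.
    + intros y _; rewrite (period_index_eq T (INR n * T) (Z.of_nat n - 1)%Z HT)
        by (rewrite minus_IZR, <- INR_IZR_INZ; lra).
      rewrite minus_IZR, <- INR_IZR_INZ.
      replace (INR n + 1) with ((INR n - 1 + 1) + 1) by ring.
      unfold a; rewrite mode_amplitude_succ by lra; ring.
    + apply cont_on2_of_continuity_2d; intros; apply continuity_2d_pt_mult_sep;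
        [apply Ca | apply continuity_pt_eigen_sin].
    + apply cont_on2_of_continuity_2d; intros; apply continuity_2d_pt_mult_sep;
        [apply continuity_pt_mult; [apply continuity_pt_opp, Ca |] | apply continuity_pt_eigen_sin].
      apply (continuity_pt_weight_rate d l0 T), Hrho.
    + apply cont_on2_of_continuity_2d; intros; apply continuity_2d_pt_mult_sep; [apply Ca |].
      apply continuity_pt_scal, continuity_pt_eigen_sin.
    + intros t y _ _; exact (mode_solution_pde d l0 T rho k g0 (INR n + 1) t y Hrho).
Qed.

Lemma R0_formula_monotone d alpha T l0 rho rho' g0 :
  0 < d -> 0 < alpha -> 0 < T -> 0 < l0 ->
  admissible_rho T rho -> admissible_rho T rho' -> 0 < g0 <= 1 ->
  (forall t, rho t <= rho' t) ->
  R0_formula d alpha T l0 rho g0 <= R0_formula d alpha T l0 rho' g0.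
Proof.
  intros Hd Halpha HT Hl0 Hrho Hrho' Hg0 Hle.
  assert (HI : RInt (fun t => 1 / (rho' t ^ 2)) 0 T <= RInt (fun t => 1 / (rho t ^ 2)) 0 T).
  { apply RInt_le; [lra | | |].
    - apply ex_RInt_of_continuity; intros t; apply (continuity_pt_inv_sqr_rho T), Hrho'.
    - apply ex_RInt_of_continuity; intros t; apply (continuity_pt_inv_sqr_rho T), Hrho.
    - intros t _; pose proof (proj1 Hrho t); unfold Rdiv; rewrite !Rmult_1_l.
      apply Rinv_le_contravar; [apply pow_lt; lra | apply pow_incr; split; [lra | apply Hle]]. }
  change (alpha / R0_denominator d T l0 rho g0 <= alpha / R0_denominator d T l0 rho' g0).
  pose proof (R0_denominator_pos d T l0 rho' g0 Hd HT Hl0 Hrho' Hg0).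
  apply Rmult_le_compat_l; [lra |]; apply Rinv_le_contravar; [assumption |].
  unfold R0_denominator; apply Rplus_le_compat_r, Rmult_le_compat_l; [| exact HI].
  apply Rlt_le, Rdiv_lt_0_compat; [apply Rmult_lt_0_compat, lambda1_pos |]; assumption.
Qed.

Theorem theorem2p1 (d alpha T l0 : R) (rho g dg : R -> R) :
  0 < d -> 0 < alpha -> 0 < T -> 0 < l0 ->
  admissible_rho T rho -> assumption_A1 g dg ->
  (forall R0 : R,
     (exists phi : R -> R -> R, pos_eigenfunction d alpha T l0 rho (dg 0) R0 phi)
     <-> R0 = R0_formula d alpha T l0 rho (dg 0)) /\
  (forall rho' : R -> R, admissible_rho T rho' ->
     (forall t, rho t <= rho' t) ->
     R0_formula d alpha T l0 rho (dg 0) <= R0_formula d alpha T l0 rho' (dg 0)).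
Proof.
  intros Hd Halpha HT Hl0 Hrho HA1.
  pose proof (assumption_A1_slope_0 g dg HA1) as Hg0.
  split.
  - intros R0; split.
    + intros [phi Hphi]; exact (R0_eq_formula_of_pos_eigenfunction d alpha T l0 rho _ R0 phi
                                  Hd Halpha HT Hl0 Hrho Hg0 Hphi).
    + intros ->.
      exact (pos_eigenfunction_of_R0_formula d alpha T l0 rho _ Hd Halpha HT Hl0 Hrho Hg0).
  - intros rho' Hrho' Hle; exact (R0_formula_monotone d alpha T l0 rho rho' _
                                    Hd Halpha HT Hl0 Hrho Hrho' Hg0 Hle).
Qed.
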